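(* Let $a,a_1\in\mathbb{C}\setminus\{0,1\}$, $a\ne a_1$, and $\alpha,\beta,\gamma\in\mathbb{C}$ with $\gamma$ not a non-positive integer. Take $\varepsilon=-1$, $\varepsilon_1=0$, $\delta=2+\alpha+\beta-\gamma$ (so that $1+\alpha+\beta=\gamma+\delta+\varepsilon+\varepsilon_1$). Let $e_1\in\mathbb{C}$, $e_1\ne 0$ and not a negative integer, satisfy $$a(\alpha-e_1)(\beta-e_1)+(\gamma-1-e_1)e_1=0,$$ and set $$\theta_0=-aa_1\alpha\beta\,\frac{1+e_1}{e_1},\qquad \theta_1=a_1\alpha\beta-\frac{\theta_0}{a_1}.$$ Then $u(z)={}_3F_2(\alpha,\beta,1+e_1;\gamma,e_1;z)$ is a solution of equation (E). Moreover, the accessory parameter $\theta_0$ so defined satisfies $$\frac{\theta_0^2}{a_1^2}+\big(1+a(\alpha+\beta+2\alpha\beta)-\gamma\big)\frac{\theta_0}{a_1}+a\alpha\beta\big(a(1+\alpha)(1+\beta)-\gamma\big)=0.$$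
   Context: Equation (E) is $$\frac{d^2u}{dz^2}+\Big(\frac{\gamma}{z}+\frac{\delta}{z-1}+\frac{\varepsilon}{z-a}+\frac{\varepsilon_1}{z-a_1}\Big)\frac{du}{dz}+\frac{\alpha\beta z^2-\theta_1 z-\theta_0}{z(z-1)(z-a)(z-a_1)}\,u=0 .$$ The generalized hypergeometric series is ${}_rF_s(p_1,\dots,p_r;q_1,\dots,q_s;z)=\sum_{n\ge0}c_nz^n$ with $c_0=1$ and $c_n/c_{n-1}=\frac{1}{n}\prod_{k=1}^r(p_k-1+n)/\prod_{k=1}^s(q_k-1+n)$. *)

(* Complex numbers are modelled by an arbitrary
   numClosedFieldType (C is one; algC is the instance in the library). *)
From HB Require Import structures.
From mathcomp Require Import all_boot all_order all_algebra.
Set Implicit Arguments. Unset Strict Implicit. Unset Printing Implicit Defensive.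
Import Order.TTheory GRing.Theory Num.Theory.
Local Open Scope ring_scope.

Definition fps (R : Type) := nat -> R.

(* Coefficients of the generalized hypergeometric series
   rF_s(ps; qs; z): c_0 = 1, c_n / c_(n-1) = (1/n) prod (p-1+n) / prod (q-1+n). *)
Fixpoint hyp_coef (R : fieldType) (ps qs : seq R) (n : nat) : R :=
  match n with
  | 0 => 1
  | m.+1 => hyp_coef ps qs m * (\prod_(p <- ps) (p - 1 + (m.+1)%:R))
            / ((m.+1)%:R * \prod_(q <- qs) (q - 1 + (m.+1)%:R))
  end.

Definition hypF (R : fieldType) (ps qs : seq R) : fps R := hyp_coef ps qs.

Definition fps_deriv (R : nzRingType) (f : fps R) : fps R :=
  fun n => f n.+1 *+ n.+1.

Definition fps_pmul (R : nzRingType) (p : {poly R}) (f : fps R) : fps R :=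
  fun n => \sum_(i < n.+1) p`_i * f (n - i)%N.

(* Equation (E), multiplied through by z(z-1)(z-a)(z-a1):
   z(z-1)(z-a)(z-a1) u'' + [g(z-1)(z-a)(z-a1) + d z(z-a)(z-a1)
      + e z(z-1)(z-a1) + e1 z(z-1)(z-a)] u' + (ab z^2 - t1 z - t0) u = 0,
   read as an identity of formal power series at z = 0. *)
Definition solves_E (R : fieldType)
  (gamma delta eps eps1 a a1 alpha beta theta1 theta0 : R) (u : fps R) : Prop :=
  let Z := ('X : {poly R}) in
  let P2 := Z * (Z - 1) * (Z - a%:P) * (Z - a1%:P) in
  let P1 := gamma%:P * (Z - 1) * (Z - a%:P) * (Z - a1%:P)
          + delta%:P * Z * (Z - a%:P) * (Z - a1%:P)
          + eps%:P * Z * (Z - 1) * (Z - a1%:P)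
          + eps1%:P * Z * (Z - 1) * (Z - a%:P) in
  let P0 := (alpha * beta)%:P * Z ^+ 2 - theta1%:P * Z - theta0%:P in
  forall n : nat,
    fps_pmul P2 (fps_deriv (fps_deriv u)) n
    + fps_pmul P1 (fps_deriv u) n + fps_pmul P0 u n = 0.

From HB Require Import structures.
From mathcomp Require Import all_boot all_order all_algebra.
From mathcomp Require Import ring.
Import Order.TTheory GRing.Theory Num.Theory.
Set Implicit Arguments.
Unset Strict Implicit.
Unset Printing Implicit Defensive.
Local Open Scope ring_scope.

(* With eps1 = 0 and theta1 = a1 alpha beta - theta0 / a1, all three
   coefficient polynomials of (E) are divisible by z - a1, so (E) is z - a1
   times the Heun equation with exponent eps = -1 at z = a and accessory
   parameter q = -theta0 / a1. Its power-series solutions obey the three-term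
   recurrence
     a (n+2)(n+1+gamma) c(n+2) - ((n+1)((n+gamma)(1+a) + a delta + eps) + q) c(n+1)
       + (n+alpha)(n+beta) c(n) = 0.
   For c = 3F2(alpha, beta, 1+e; gamma, e), whose coefficient ratio is that of
   2F1 times (e+n+1)/(e+n), the left side works out to
     -(alpha+n)(beta+n) c(n) P(e) / (e (gamma+n) (e+n)),
   where P(e) = a (alpha-e)(beta-e) + (gamma-1-e) e, which vanishes by the
   choice of e. The quadratic in theta0 / a1 = -q is likewise a alpha beta
   P(e) / e^2. *)

Section FpsPolyAction.
Variable R : nzRingType.
Implicit Types (p q : {poly R}) (f g : fps R).

Lemma fps_pmul_rev p f n : fps_pmul p f n = \sum_(k < n.+1) p`_(n - k) * f k.
Proof.
rewrite /fps_pmul (reindex_inj rev_ord_inj) /=.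
by apply: eq_bigr => k _; rewrite (sub_ordK k).
Qed.

Lemma fps_pmulA p q f n : fps_pmul (p * q) f n = fps_pmul p (fps_pmul q f) n.
Proof.
rewrite fps_pmul_rev {2}/fps_pmul.
pose t j k := p`_j * (q`_(n - j - k) * f k).
transitivity (\sum_(k < n.+1) \sum_(j < n.+1 | (j <= n - k)%N) t j k).
  apply: eq_bigr => k _; rewrite coefM big_distrl /=.
  rewrite (big_ord_narrow_leq (leq_subr _ _)).
  by apply: eq_bigr => j _; rewrite /t -!subnDA addnC mulrA.
rewrite (exchange_big_dep predT) //=; apply: eq_bigr => j _.
transitivity (\sum_(k < n.+1 | (k <= n - j)%N) t j k).
  apply: eq_bigl => k; rewrite -ltnS -(ltnS k) -!subSn ?leq_ord //.
  by rewrite -subn_gt0 -(subn_gt0 k) -!subnDA addnC.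
rewrite (big_ord_narrow_leq (leq_subr _ _)) /t -!big_distrr /=.
by rewrite -fps_pmul_rev.
Qed.

Lemma fps_pmulDr p f g n :
  fps_pmul p (fun k => f k + g k) n = fps_pmul p f n + fps_pmul p g n.
Proof. by rewrite /fps_pmul -big_split; apply: eq_bigr => i _; rewrite mulrDr. Qed.

Lemma fps_pmul_eq0 p f n : (forall k, f k = 0) -> fps_pmul p f n = 0.
Proof. by move=> f0; apply: big1 => i _; rewrite f0 mulr0. Qed.

Lemma fps_pmul_small p f k n : (size p <= k)%N ->
  fps_pmul p f n = \sum_(i < k | (i <= n)%N) p`_i * f (n - i)%N.
Proof.
move=> le_p_k; rewrite /fps_pmul [RHS]big_mkcond /=.
rewrite (big_ord_widen (n.+1 + k) (fun i => p`_i * f (n - i)%N)) ?leq_addr //.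
rewrite (big_ord_widen (n.+1 + k)
  (fun i => if (i <= n)%N then p`_i * f (n - i)%N else 0)) ?leq_addl //.
rewrite [LHS]big_mkcond [RHS]big_mkcond; apply: eq_bigr => i _.
rewrite ltnS; case: (ltnP i k) => ik; case: (leqP i n) => //= _.
by rewrite nth_default ?mul0r // (leq_trans le_p_k).
Qed.
End FpsPolyAction.

Section HeunOperator.
Variables (R : comNzRingType) (a gamma delta eps alpha beta q : R).

Definition heun_residual (u : fps R) : fps R := fun n =>
  fps_pmul ('X * ('X - 1) * ('X - a%:P)) (fps_deriv (fps_deriv u)) n
  + fps_pmul (gamma%:P * ('X - 1) * ('X - a%:P) + delta%:P * 'X * ('X - a%:P)
              + eps%:P * 'X * ('X - 1)) (fps_deriv u) n
  + fps_pmul ((alpha * beta)%:P * 'X - q%:P) u n.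

Let heun_polys :
  [/\ 'X * ('X - 1) * ('X - a%:P) = Poly [:: 0; a; - (1 + a); 1],
      gamma%:P * ('X - 1) * ('X - a%:P) + delta%:P * 'X * ('X - a%:P)
        + eps%:P * 'X * ('X - 1) =
      Poly [:: gamma * a; - (gamma * (1 + a) + delta * a + eps); gamma + delta + eps]
    & (alpha * beta)%:P * 'X - q%:P = Poly [:: - q; alpha * beta]].
Proof.
rewrite /= !cons_poly_def !(polyCD, polyCM, polyCN, polyC1, polyC0).
by split; ring.
Qed.

Let heun_residual_expand u n : heun_residual u n =
  \sum_(i < 4 | (i <= n)%N)
    ([:: 0; a; - (1 + a); 1]`_i * fps_deriv (fps_deriv u) (n - i)%N
     + [:: gamma * a; - (gamma * (1 + a) + delta * a + eps); gamma + delta + eps]`_i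
         * fps_deriv u (n - i)%N
     + [:: - q; alpha * beta]`_i * u (n - i)%N).
Proof.
rewrite /heun_residual; have [-> -> ->] := heun_polys.
rewrite !(@fps_pmul_small _ _ _ 4) ?(leq_trans (size_Poly _)) // -!big_split.
by apply: eq_bigr => i _; rewrite !coef_Poly.
Qed.

Lemma heun_residual0 u : heun_residual u 0 = a * gamma * u 1 - q * u 0.
Proof.
rewrite heun_residual_expand big_mkcond !big_ord_recl big_ord0 /= /fps_deriv.
rewrite !subn0; ring.
Qed.

Lemma heun_residualS (fuchs : gamma + delta + eps = alpha + beta + 1) u n :
  heun_residual u n.+1 =
  a * n.+2%:R * (n.+1%:R + gamma) * u n.+2
  - (n.+1%:R * ((n%:R + gamma) * (1 + a) + a * delta + eps) + q) * u n.+1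
  + (n%:R + alpha) * (n%:R + beta) * u n.
Proof.
rewrite heun_residual_expand big_mkcond !big_ord_recl big_ord0 /= /fps_deriv.
have -> : eps = alpha + beta + 1 - gamma - delta by rewrite -fuchs; ring.
by case: n => [|[|n]] /=; rewrite ?subn0 ?subSS ?subn0; ring.
Qed.
End HeunOperator.

Lemma hypF_succ (R : fieldType) (ps qs : seq R) n :
  hypF ps qs n.+1 =
  hypF ps qs n * \prod_(p <- ps) (p + n%:R) / (n.+1%:R * \prod_(q <- qs) (q + n%:R)).
Proof.
by rewrite /hypF /=; congr (_ * _ / (_ * _)); apply: eq_bigr => x _;
  rewrite -natr1; ring.
Qed.

Lemma hyp3F2_heun_residual (R : numFieldType) (a alpha beta gamma e : R)
    (gamma_neq : forall k : nat, gamma + k%:R != 0)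
    (e_neq : forall k : nat, e + k%:R != 0)
    (char_e : a * (alpha - e) * (beta - e) + (gamma - 1 - e) * e = 0) n :
  heun_residual a gamma (2 + alpha + beta - gamma) (-1) alpha beta
    (a * alpha * beta * ((1 + e) / e)) (hypF [:: alpha; beta; 1 + e] [:: gamma; e]) n = 0.
Proof.
have e_neq0 : e != 0 by have := e_neq 0%N; rewrite addr0.
have gamma_neq0 : gamma != 0 by have := gamma_neq 0%N; rewrite addr0.
case: n => [|n].
  rewrite heun_residual0 hypF_succ !big_cons !big_nil /=.
  by field; rewrite e_neq0 gamma_neq0.
rewrite heun_residualS; last by ring.
rewrite !hypF_succ !big_cons !big_nil.
set c := hypF _ _ n.
transitivity (- ((alpha + n%:R) * (beta + n%:R) * c)
  * (a * (alpha - e) * (beta - e) + (gamma - 1 - e) * e)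
  / (e * (gamma + n%:R) * (e + n%:R))).
  by field; rewrite !nat1r -natrD e_neq0 !gamma_neq !e_neq !pnatr_eq0.
by rewrite char_e mulr0 mul0r.
Qed.

Lemma heun_solves_E (R : fieldType) (a a1 gamma delta eps alpha beta q : R) (u : fps R) :
  (forall n, heun_residual a gamma delta eps alpha beta q u n = 0) ->
  solves_E gamma delta eps 0 a a1 alpha beta (a1 * alpha * beta + q) (- (a1 * q)) u.
Proof.
move=> heun_u; rewrite /solves_E /= polyC0 !mul0r addr0.
rewrite (_ : 'X * ('X - 1) * ('X - a%:P) * ('X - a1%:P)
           = ('X - a1%:P) * ('X * ('X - 1) * ('X - a%:P))); last by ring.
rewrite (_ : gamma%:P * ('X - 1) * ('X - a%:P) * ('X - a1%:P)
             + delta%:P * 'X * ('X - a%:P) * ('X - a1%:P)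
             + eps%:P * 'X * ('X - 1) * ('X - a1%:P)
           = ('X - a1%:P) * (gamma%:P * ('X - 1) * ('X - a%:P)
               + delta%:P * 'X * ('X - a%:P) + eps%:P * 'X * ('X - 1))); last by ring.
rewrite (_ : (alpha * beta)%:P * 'X ^+ 2 - (a1 * alpha * beta + q)%:P * 'X - (- (a1 * q))%:P
           = ('X - a1%:P) * ((alpha * beta)%:P * 'X - q%:P)); last first.
  by rewrite !(polyCD, polyCM, polyCN); ring.
move=> n; rewrite !fps_pmulA -!fps_pmulDr; exact: fps_pmul_eq0.
Qed.

Lemma heun_accessory_quadratic (R : fieldType) (a alpha beta gamma e : R) :
  e != 0 ->
  let t := - (a * alpha * beta * ((1 + e) / e)) in
  t ^+ 2 + (1 + a * (alpha + beta + 2 * alpha * beta) - gamma) * t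
  + a * alpha * beta * (a * (1 + alpha) * (1 + beta) - gamma)
  = a * alpha * beta * (a * (alpha - e) * (beta - e) + (gamma - 1 - e) * e) / e ^+ 2.
Proof. by move=> e_neq0 t; rewrite /t; field. Qed.

Theorem mainTheorem2 (C : numClosedFieldType)
  (a a1 alpha beta gamma e1 : C)
  (ha0 : a != 0) (ha1 : a != 1) (ha10 : a1 != 0) (ha11 : a1 != 1)
  (haa1 : a != a1)
  (hgamma : forall k : nat, gamma != - k%:R)
  (he10 : e1 != 0)
  (he1neg : forall k : nat, e1 != - (k.+1)%:R)
  (he1 : a * (alpha - e1) * (beta - e1) + (gamma - 1 - e1) * e1 = 0) :
  let eps := -1 in
  let eps1 := 0 in
  let delta := 2 + alpha + beta - gamma in
  let theta0 := - (a * a1 * alpha * beta) * ((1 + e1) / e1) in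
  let theta1 := a1 * alpha * beta - theta0 / a1 in
  solves_E gamma delta eps eps1 a a1 alpha beta theta1 theta0
    (hypF [:: alpha; beta; 1 + e1] [:: gamma; e1])
  /\
  (theta0 ^+ 2 / a1 ^+ 2
   + (1 + a * (alpha + beta + 2 * alpha * beta) - gamma) * (theta0 / a1)
   + a * alpha * beta * (a * (1 + alpha) * (1 + beta) - gamma) = 0).
Proof.
move=> eps eps1 delta theta0 theta1.
set q := a * alpha * beta * ((1 + e1) / e1).
have theta0E : theta0 = - (a1 * q) by rewrite /theta0 /q; ring.
have theta0_a1 : theta0 / a1 = - q by rewrite theta0E; field.
have theta1E : theta1 = a1 * alpha * beta + q by rewrite /theta1 theta0_a1 opprK.
have gamma_neq k : gamma + k%:R != 0 by rewrite addr_eq0.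
have e1_neq k : e1 + k%:R != 0 by case: k => [|k]; rewrite ?addr0 // addr_eq0.
split.
  rewrite theta1E theta0E; apply: heun_solves_E => n.
  exact: hyp3F2_heun_residual.
rewrite -expr_div_n theta0_a1 heun_accessory_quadratic //.
by rewrite he1 mulr0 mul0r.
Qed.
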